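(* Let $m\ge1$ and let $Q$ be a quadratic form on $\mathbb{F}_2^{\oplus2m}$ of Arf invariant $1$ with polar form the standard alternating form $\langle,\rangle$. Let $\mathrm{O}(Q)\subset\mathrm{Sp}_{2m}(\mathbb{F}_2)$ be the group of $\mathbb{F}_2$-linear automorphisms preserving $Q$, with identity $e$. Then there exist $\sigma,\tau\in\mathrm{O}(Q)$ such that: (a) $\sigma\neq e$; (b) $\tau^2=e$; (c) $\tau\sigma\tau=\sigma^{-1}$; (d) for every $i$ with $\sigma^i\neq e$, $\sigma^i$ has no non-zero fixed vector in $\mathbb{F}_2^{\oplus2m}$; (e) for every integer $i$, $\tau\sigma^i$ has a non-zero fixed vector $x$ (possibly depending on $i$) with $Q(x)=1$.
   Context: The standard alternating form on $\mathbb{F}_2^{\oplus2m}$ with basis $e_1,\dots,e_m,f_1,\dots,f_m$: $\langle e_i,e_j\rangle=\langle f_i,f_j\rangle=0$, $\langle e_i,f_j\rangle=\langle f_j,e_i\rangle=\delta_{ij}$. A quadratic form with polar form $\langle,\rangle$ is $Q:\mathbb{F}_2^{\oplus 2m}\to\mathbb{F}_2$ with $Q(x+y)-Q(x)-Q(y)=\langle x,y\rangle$. Its Arf invariant is $\sum_{i=1}^m Q(e_i)Q(f_i)$ for any symplectic basis; equivalently it is the $a\in\{0,1\}$ such that $\#\{x: Q(x)=a\}=2^{m-1}(2^m+1)$. *)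

From HB Require Import structures.
From mathcomp Require Import all_boot all_order all_algebra all_fingroup.
Set Implicit Arguments. Unset Strict Implicit. Unset Printing Implicit Defensive.
Import GRing.Theory.
Local Open Scope ring_scope.

(* V = F_2^{2m} as row vectors; coordinates lshift m i <-> e_i, rshift m i <-> f_i *)
Notation V m := 'rV['F_2]_(m + m).

Definition e_vec (m : nat) (i : 'I_m) : V m := delta_mx 0 (lshift m i).
Definition f_vec (m : nat) (i : 'I_m) : V m := delta_mx 0 (rshift m i).

Definition std_form (m : nat) (x y : V m) : 'F_2 :=
  \sum_(i < m) (x 0 (lshift m i) * y 0 (rshift m i)
                + x 0 (rshift m i) * y 0 (lshift m i)).

Definition is_quadratic_form (m : nat) (Q : V m -> 'F_2) : Prop :=
  forall x y : V m, Q (x + y) - Q x - Q y = std_form x y.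

Definition arf (m : nat) (Q : V m -> 'F_2) : 'F_2 :=
  \sum_(i < m) Q (e_vec i) * Q (f_vec i).

Definition in_OQ (m : nat) (Q : V m -> 'F_2) (g : {perm V m}) : Prop :=
  (forall (a : 'F_2) (x y : V m), g (a *: x + y) = a *: g x + g y) /\
  (forall x : V m, Q (g x) = Q x).

Definition gpowz (gT : finGroupType) (g : gT) (i : int) : gT :=
  match i with
  | Posz n => (g ^+ n)%g
  | Negz n => ((g ^+ n.+1)^-1)%g
  end.

From HB Require Import structures.
From mathcomp Require Import all_boot all_order all_algebra all_fingroup.
From mathcomp Require Import cyclic finfield zify ring.
Set Implicit Arguments. Unset Strict Implicit. Unset Printing Implicit Defensive.
Import GRing.Theory.
Local Open Scope ring_scope.

(* Let q = 2^m, K = F_(q^2) and L = F_q.  The norm form z |-> Tr_(L/F_2)(z^(q+1))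
   is a quadratic form on the 2m-dimensional F_2-space K with polar form
   Tr (z w^q + z^q w).  Writing K = L + L theta with theta^q = theta + 1 and taking
   F_2-bases (l_i), (l'_i) of L that are dual for the trace form, the coordinates
   x |-> sum x_i l_i + (sum y_i l'_i) theta turn this polar form into the standard
   one, and the Arf invariant becomes Tr (N theta) = 1.  Quadratic forms with the
   same polar form and the same Arf invariant differ by a transvection, so Q is
   isometric to the norm form.  There, multiplication by an element zeta of order
   q + 1 preserves the norm and fixes no nonzero vector unless it is trivial, and
   the Frobenius z |-> z^q is an involution inverting zeta.  Writing zeta = g^(q-1)
   for a generator g of K^*, the map z |-> (zeta^i z)^q fixes s g^i for all s in L,
   and the norms s^2 N(g^i) of these run over L^*, so one of them has trace 1. *)

Lemma F2_cases (b : 'F_2) : b = 0 \/ b = 1.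
Proof. by case: b => [[|[|n]]] //= lt_b; [left | right]; apply: val_inj. Qed.

Lemma F2_pchar : 2%N \in [pchar 'F_2]. Proof. exact: pchar_Fp. Qed.

Lemma sum_delta_mull (R : pzSemiRingType) (I : finType) (F : I -> R) (i : I) :
  \sum_j (i == j)%:R * F j = F i.
Proof.
rewrite (bigD1 i) //= eqxx mul1r big1 ?addr0 // => j /negbTE.
by rewrite eq_sym => ->; rewrite mul0r.
Qed.

Lemma sum_delta_ord_nat (R : comPzSemiRingType) n (F : 'I_n -> R) i (lt_in : (i < n)%N) :
  \sum_(j < n) F j * (i == j)%:R = F (Ordinal lt_in).
Proof.
rewrite -(sum_delta_mull F); apply: eq_bigr => j _.
by rewrite mulrC -[i]/(val (Ordinal lt_in)) val_eqE.
Qed.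

Lemma gpowz_expg (gT : finGroupType) (x : gT) (i : int) : exists n, gpowz x i = (x ^+ n)%g.
Proof.
case: i => n; first by exists n.
by exists (#[x]%g.-1 * n.+1)%N; rewrite /= -expgVn invg_expg expgM.
Qed.

Section SymplecticSpace.
Variable m : nat.
Implicit Types (x y z a : V m) (i j : 'I_m).

Lemma oppvF2 x : - x = x.
Proof. by apply/rowP => k; rewrite mxE (oppr_pchar2 F2_pchar). Qed.

Lemma addvvF2 x : x + x = 0.
Proof. by rewrite -{2}[x]oppvF2 subrr. Qed.

Lemma additive_F2linear (f : V m -> V m) : {morph f : x y / x + y} ->
  forall (a : 'F_2) x y, f (a *: x + y) = a *: f x + f y.
Proof. by move=> fD a x y; case: (F2_cases a) => ->; rewrite ?scale0r ?add0r ?scale1r. Qed.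

Lemma e_vec_lshift i j : e_vec i 0 (lshift m j) = (i == j)%:R.
Proof. by rewrite mxE eqxx eq_lshift eq_sym. Qed.
Lemma e_vec_rshift i j : e_vec i 0 (rshift m j) = 0.
Proof. by rewrite mxE eq_rlshift andbF. Qed.
Lemma f_vec_lshift i j : f_vec i 0 (lshift m j) = 0.
Proof. by rewrite mxE eq_lrshift andbF. Qed.
Lemma f_vec_rshift i j : f_vec i 0 (rshift m j) = (i == j)%:R.
Proof. by rewrite mxE eqxx eq_rshift eq_sym. Qed.

Lemma additive_eq0_on_basis (D : V m -> 'F_2) : {morph D : x y / x + y} ->
  (forall i, D (e_vec i) = 0) -> (forall i, D (f_vec i) = 0) -> forall x, D x = 0.
Proof.
move=> DD De Df x; have D0 : D 0 = 0 by apply: (addrI (D 0)); rewrite -DD !addr0.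
rewrite (row_sum_delta x) (big_morph D DD D0) big1 // => k _.
case: (F2_cases (x 0 k)) => ->; first by rewrite scale0r.
by rewrite scale1r -(splitK k); case: (split k) => j /=; [exact: De | exact: Df].
Qed.

Lemma std_formC x y : std_form x y = std_form y x.
Proof. by apply: eq_bigr => i _; ring. Qed.

Lemma std_formDr x y z : std_form x (y + z) = std_form x y + std_form x z.
Proof. by rewrite /std_form -big_split; apply: eq_bigr => i _ /=; rewrite !mxE; ring. Qed.

Lemma std_formZr x y (b : 'F_2) : std_form x (b *: y) = b * std_form x y.
Proof. by rewrite /std_form mulr_sumr; apply: eq_bigr => i _; rewrite !mxE; ring. Qed.

Lemma std_form_xx x : std_form x x = 0.
Proof. by rewrite /std_form big1 // => i _; rewrite mulrC (addrr_pchar2 F2_pchar). Qed.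

Lemma std_form_e x i : std_form x (e_vec i) = x 0 (rshift m i).
Proof.
rewrite /std_form -(sum_delta_mull (fun j => x 0 (rshift m j)) i).
by apply: eq_bigr => j _; rewrite e_vec_lshift e_vec_rshift mulr0 add0r mulrC.
Qed.

Lemma std_form_f x i : std_form x (f_vec i) = x 0 (lshift m i).
Proof.
rewrite /std_form -(sum_delta_mull (fun j => x 0 (lshift m j)) i).
by apply: eq_bigr => j _; rewrite f_vec_lshift f_vec_rshift mulr0 addr0 mulrC.
Qed.

Definition transvection a x : V m := x + std_form a x *: a.

Lemma transvectionK a : involutive (transvection a).
Proof.
move=> x; rewrite /transvection std_formDr std_formZr std_form_xx mulr0 addr0.
by rewrite -addrA addvvF2 addr0.
Qed.

Lemma transvectionD a : {morph transvection a : x y / x + y}.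
Proof. by move=> x y; rewrite /transvection std_formDr scalerDl addrACA. Qed.

Lemma is_quadratic_formP (Q : V m -> 'F_2) :
  (forall x y, Q (x + y) = Q x + Q y + std_form x y) -> is_quadratic_form Q.
Proof. by move=> QD x y; rewrite QD; ring. Qed.

Section QuadraticForm.
Variable Q : V m -> 'F_2.
Hypothesis hQ : is_quadratic_form Q.

Lemma quadratic_formD x y : Q (x + y) = Q x + Q y + std_form x y.
Proof. by move/eqP: (hQ x y); rewrite !subr_eq => /eqP ->; ring. Qed.

Lemma quadratic_form_coord x : Q x = \sum_i (x 0 (lshift m i) * Q (e_vec i)
   + x 0 (rshift m i) * Q (f_vec i) + x 0 (lshift m i) * x 0 (rshift m i)).
Proof.
pose P x := \sum_(i < m) (x 0 (lshift m i) * Q (e_vec i)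
   + x 0 (rshift m i) * Q (f_vec i) + x 0 (lshift m i) * x 0 (rshift m i)).
have PD y z : P (y + z) = P y + P z + std_form y z.
  by rewrite /P /std_form -!big_split; apply: eq_bigr => i _ /=; rewrite !mxE; ring.
apply/eqP; rewrite -subr_eq0 -/(P x); apply/eqP; move: x.
apply: additive_eq0_on_basis.
- by move=> y z; rewrite quadratic_formD PD; ring.
- move=> i; rewrite /P (eq_bigr (fun j => (i == j)%:R * Q (e_vec j))).
    by rewrite sum_delta_mull subrr.
  by move=> j _; rewrite e_vec_lshift e_vec_rshift !mul0r !mulr0 !addr0.
- move=> i; rewrite /P (eq_bigr (fun j => (i == j)%:R * Q (f_vec j))).
    by rewrite sum_delta_mull subrr.
  by move=> j _; rewrite f_vec_lshift f_vec_rshift !mul0r add0r addr0.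
Qed.

Lemma quadratic_form_transvection a x :
  Q a = 0 -> Q (transvection a x) = Q x + std_form a x.
Proof.
move=> Qa; rewrite /transvection; case: (F2_cases (std_form a x)) => ax; rewrite ax.
  by rewrite scale0r !addr0.
by rewrite scale1r quadratic_formD Qa addr0 std_formC ax.
Qed.

End QuadraticForm.

Lemma arf_transvection (Q R : V m -> 'F_2) :
  is_quadratic_form Q -> is_quadratic_form R -> arf R = 1 -> arf Q = 1 ->
  exists a, Q a = 0 /\ forall x, R x = Q (transvection a x).
Proof.
move=> hQ hR arfR arfQ; pose D x := R x - Q x.
have DD : {morph D : x y / x + y}.
  by move=> x y; rewrite /D (quadratic_formD hQ) (quadratic_formD hR); ring.
pose a : V m := row_mx (\row_i D (f_vec i)) (\row_i D (e_vec i)).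
have RQ x : R x = Q x + std_form a x.
  suff Dx : D x = std_form a x by rewrite -Dx /D addrC subrK.
  apply/eqP; rewrite -subr_eq0; apply/eqP; move: x; apply: additive_eq0_on_basis.
  - by move=> x y; rewrite DD std_formDr; ring.
  - by move=> i; rewrite std_form_e row_mxEr mxE subrr.
  - by move=> i; rewrite std_form_f row_mxEl mxE subrr.
have Qa : Q a = 0.
  have : arf R = arf Q + Q a.
    rewrite (quadratic_form_coord hQ) /arf -big_split; apply: eq_bigr => i _ /=.
    by rewrite !RQ std_form_e std_form_f row_mxEl row_mxEr !mxE /D; ring.
  by rewrite arfR arfQ => E; apply: (addrI 1); rewrite addr0 -E.
by exists a; split => // x; rewrite (quadratic_form_transvection hQ).
Qed.

End SymplecticSpace.

Section Char2Field.
Variables (K : fieldType) (m : nat).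
Hypothesis hK : 2%N \in [pchar K].
Local Notation q := (2 ^ m)%N.

Lemma exprD_pow2 n (x y : K) : (x + y) ^+ (2 ^ n) = x ^+ (2 ^ n) + y ^+ (2 ^ n).
Proof.
apply: exprDn_pchar; rewrite pnatX; case: n => [|n]; first by rewrite orbT.
by rewrite orbF pnatE.
Qed.

Lemma expr_pow2_sum n (I : finType) (F : I -> K) :
  (\sum_i F i) ^+ (2 ^ n) = \sum_i F i ^+ (2 ^ n).
Proof.
apply: (big_morph (fun x : K => x ^+ (2 ^ n))); first exact: exprD_pow2.
by rewrite expr0n expn_eq0.
Qed.

Definition ofF2 (b : 'F_2) : K := (b : nat)%:R.
(* a left inverse of ofF2, meaningful only on {0, 1} *)
Definition toF2 (z : K) : 'F_2 := if z == 0 then 0 else 1.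

Lemma ofF2_0 : ofF2 0 = 0. Proof. by []. Qed.
Lemma ofF2_1 : ofF2 1 = 1. Proof. by rewrite /ofF2 /= mulr1n. Qed.

Lemma ofF2_nat (b : bool) : ofF2 b%:R = b%:R.
Proof. by case: b; rewrite ?ofF2_0 ?ofF2_1. Qed.

Lemma ofF2D : {morph ofF2 : a b / a + b}.
Proof.
move=> a b; case: (F2_cases a) => ->; case: (F2_cases b) => ->;
  rewrite ?add0r ?addr0 ?ofF2_0 ?ofF2_1 ?add0r ?addr0 //.
by rewrite (addrr_pchar2 F2_pchar) (addrr_pchar2 hK).
Qed.

Lemma ofF2M : {morph ofF2 : a b / a * b}.
Proof.
by move=> a b; case: (F2_cases a) => ->; case: (F2_cases b) => ->;
  rewrite ?mul0r ?mulr0 ?mul1r ?mulr1 ?ofF2_0 ?ofF2_1 ?mul0r ?mul1r.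
Qed.

Lemma ofF2_sum (I : finType) (F : I -> 'F_2) : ofF2 (\sum_i F i) = \sum_i ofF2 (F i).
Proof. exact: (big_morph ofF2 ofF2D ofF2_0). Qed.

Lemma ofF2K : cancel ofF2 toF2.
Proof. by move=> b; case: (F2_cases b) => ->; rewrite ?ofF2_0 ?ofF2_1 /toF2 ?eqxx ?oner_eq0. Qed.

Lemma ofF2_inj : injective ofF2. Proof. exact: can_inj ofF2K. Qed.

Definition trace (y : K) : K := \sum_(j < m) y ^+ (2 ^ j).

Lemma traceD : {morph trace : y z / y + z}.
Proof. by move=> y z; rewrite /trace -big_split; apply: eq_bigr => j _; rewrite exprD_pow2. Qed.

Lemma trace0 : trace 0 = 0.
Proof. by rewrite /trace big1 // => j _; rewrite expr0n expn_eq0. Qed.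

Lemma trace_sum (I : finType) (F : I -> K) : trace (\sum_i F i) = \sum_i trace (F i).
Proof. exact: (big_morph trace traceD trace0). Qed.

Lemma trace_ofF2Z b y : trace (ofF2 b * y) = ofF2 b * trace y.
Proof. by case: (F2_cases b) => ->; rewrite ?ofF2_0 ?ofF2_1 ?mul0r ?mul1r ?trace0. Qed.

Lemma trace_sqr y : trace y ^+ 2 = trace (y ^+ 2).
Proof.
rewrite /trace -[2%N]/(2 ^ 1)%N expr_pow2_sum.
by apply: eq_bigr => j _; rewrite -!exprM mulnC.
Qed.

Lemma traceX2 y : (0 < m)%N -> trace (y ^+ 2) = trace y + y ^+ q + y.
Proof.
rewrite /trace; case: m => // n _; rewrite big_ord_recr big_ord_recl /= expn0 expr1.
under eq_bigr => j _ do rewrite -exprM -expnS.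
under [X in _ = _ + X + _ + _]eq_bigr => j _ do rewrite /bump leq0n add1n.
by rewrite -exprM -expnS [RHS]addrC !addrA (addrr_pchar2 hK) add0r.
Qed.

Lemma trace_fixedK y : y ^+ q = y -> ofF2 (toF2 (trace y)) = trace y.
Proof.
move=> yq; have : trace y * (trace y - 1) = 0.
  rewrite mulrBr -expr2 trace_sqr mulr1.
  case: (posnP m) => [m0 | m_gt0]; first by rewrite /trace m0 !big_ord0 subrr.
  by rewrite traceX2 // yq -[_ + y + y]addrA (addrr_pchar2 hK) addr0 subrr.
move/eqP; rewrite mulf_eq0 subr_eq0 => /orP[] /eqP ->.
  by rewrite /toF2 eqxx ofF2_0.
by rewrite /toF2 oner_eq0 ofF2_1.
Qed.

End Char2Field.

Section FiniteField.
Variables (K : finFieldType) (m : nat).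
Hypotheses (m_gt0 : (0 < m)%N) (hK : 2%N \in [pchar K]) (cardK : #|K| = (2 ^ (m + m))%N).
Local Notation q := (2 ^ m)%N.
Local Notation Tr := (trace m).

Lemma q_ge2 : (2 <= q)%N.
Proof. by case: m m_gt0 => // n _; rewrite expnS leq_pmulr ?expn_gt0. Qed.

Lemma exprqq (x : K) : x ^+ (q * q)%N = x.
Proof. by rewrite -expnD -cardK expf_card. Qed.

Lemma exprqK : involutive (fun x : K => x ^+ q).
Proof. by move=> x; rewrite -exprM exprqq. Qed.

Definition subFq : {set K} := [set y | y ^+ q == y].

Lemma subFqP y : reflect (y ^+ q = y) (y \in subFq).
Proof. by rewrite inE; apply: eqP. Qed.

Lemma subFq0 : 0 \in subFq.
Proof. by apply/subFqP; rewrite expr0n expn_eq0. Qed.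

Lemma subFqD a b : a \in subFq -> b \in subFq -> a + b \in subFq.
Proof. by move=> /subFqP aq /subFqP bq; apply/subFqP; rewrite exprD_pow2 // aq bq. Qed.

Lemma subFqM a b : a \in subFq -> b \in subFq -> a * b \in subFq.
Proof. by move=> /subFqP aq /subFqP bq; apply/subFqP; rewrite exprMn aq bq. Qed.

Lemma subFqV a : a \in subFq -> a^-1 \in subFq.
Proof. by move=> /subFqP aq; apply/subFqP; rewrite exprVn aq. Qed.

Lemma subFq_sum (I : finType) (F : I -> K) :
  (forall i, F i \in subFq) -> \sum_i F i \in subFq.
Proof. by move=> FFq; apply: (big_ind (fun x => x \in subFq)); [exact: subFq0 | exact: subFqD |]. Qed.

Lemma subFq_ofF2 b : ofF2 K b \in subFq.
Proof.
by case: (F2_cases b) => ->; rewrite ?ofF2_0 ?subFq0 ?ofF2_1 //; apply/subFqP; exact: expr1n.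
Qed.

Lemma trace_subFqK a : a \in subFq -> ofF2 K (toF2 (Tr a)) = Tr a.
Proof. by move/subFqP; exact: trace_fixedK. Qed.

Lemma subFq_trace a : a \in subFq -> Tr a \in subFq.
Proof. by move/trace_subFqK <-; exact: subFq_ofF2. Qed.

Lemma trace_sqr_subFq a : a \in subFq -> Tr (a ^+ 2) = Tr a.
Proof. by move/subFqP=> aq; rewrite traceX2 // aq -addrA (addrr_pchar2 hK) addr0. Qed.

Lemma subFq_sqrt a : a \in subFq -> exists2 s, s \in subFq & s ^+ 2 = a.
Proof.
move=> /subFqP aq; exists (a ^+ (2 ^ m.-1)).
  by apply/subFqP; rewrite -exprM mulnC exprM aq.
by rewrite -exprM -expnSr prednK.
Qed.

(* subFq is the root set of X^q - X *)
Lemma card_subFq_le : (#|subFq| <= q)%N.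
Proof.
pose p : {poly K} := 'X^q - 'X.
have size_p : size p = q.+1.
  by rewrite /p size_polyDl size_polyXn // size_polyN size_polyX ltnS q_ge2.
have p_neq0 : p != 0 by rewrite -size_poly_gt0 size_p.
rewrite cardE -ltnS -size_p; apply: max_poly_roots p_neq0 _ (enum_uniq _).
by apply/allP => x; rewrite mem_enum => /subFqP xq; rewrite /root !hornerE xq subrr.
Qed.

Lemma exists_prim_root : exists g : K, (q * q - 1)%N.-primitive_root g.
Proof.
have n_gt0 : (0 < q * q - 1)%N by have := q_ge2; nia.
have /hasP[g _ prim_g] : has (q * q - 1)%N.-primitive_root (enum [set~ (0 : K)]).
  apply: has_prim_root => //; last by rewrite -cardE cardsC1 cardK expnD subn1.
    apply/allP => x; rewrite mem_enum !inE => x_neq0.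
    rewrite unity_rootE; apply/eqP; apply: (mulfI x_neq0).
    rewrite -exprS mulr1 subn1 prednK; [exact: exprqq | nia].
  exact: enum_uniq.
by exists g.
Qed.

Variable g : K.
Hypothesis prim_g : (q * q - 1)%N.-primitive_root g.

Lemma g_neq0 : g != 0.
Proof.
apply/eqP => g0; move: (prim_expr_order prim_g); rewrite g0 expr0n.
have -> : (q * q - 1 == 0)%N = false by have := q_ge2; nia.
by move/eqP; rewrite eq_sym oner_eq0.
Qed.

Lemma gX_neq1 k : (0 < k < q * q - 1)%N -> g ^+ k != 1.
Proof.
case/andP=> k_gt0 lt_k; rewrite -(prim_order_dvd prim_g).
by apply: contraTN lt_k => /(dvdn_leq k_gt0); rewrite leqNgt.
Qed.

Lemma gexpq_neq : g ^+ q != g.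
Proof.
have q1 : (0 < q - 1 < q * q - 1)%N by have := q_ge2; nia.
apply: contraNneq (gX_neq1 q1) => gq; apply/eqP; apply: (mulfI g_neq0).
by rewrite -exprS subn1 prednK ?gq ?mulr1 // (ltnW q_ge2).
Qed.

Definition norm (z : K) : K := z ^+ (q + 1).

Lemma normE z : norm z = z ^+ q * z.
Proof. by rewrite /norm addn1 exprSr. Qed.

Lemma normM : {morph norm : z w / z * w}.
Proof. by move=> z w; rewrite /norm exprMn. Qed.

Lemma normD z w : norm (z + w) = norm z + norm w + (z * w ^+ q + z ^+ q * w).
Proof. by rewrite !normE exprD_pow2 //; ring. Qed.

Lemma subFq_norm z : norm z \in subFq.
Proof. by apply/subFqP; rewrite normE exprMn exprqK mulrC -normE. Qed.

Lemma norm_subFq a : a \in subFq -> norm a = a ^+ 2.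
Proof. by move/subFqP=> aq; rewrite normE aq expr2. Qed.

Lemma norm_frobenius z : norm (z ^+ q) = norm z.
Proof. by rewrite normE exprqK mulrC -normE. Qed.

(* the elements N(g^k) = g^((q+1)k), k < q - 1, of subFq are distinct and nonzero *)
Lemma card_subFq : #|subFq| = q.
Proof.
apply/eqP; rewrite eqn_leq card_subFq_le /=.
have qq1 : ((q + 1) * (q - 1) = q * q - 1)%N by have := q_ge2; nia.
pose f (k : 'I_(q - 1)) := g ^+ ((q + 1) * k).
have f_inj : injective f.
  move=> a b /eqP; rewrite /f (eq_prim_root_expr prim_g) -qq1 -!muln_modr.
  rewrite eqn_pmul2l ?addn1 // !modn_small ?ltn_ord // => /eqP ab.
  exact: val_inj.
have sub_f : [set f k | k in 'I_(q - 1)] \subset subFq :\ 0.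
  apply/subsetP => _ /imsetP[k _ ->]; rewrite in_setD1 /f expf_eq0 negb_and g_neq0 orbT.
  by rewrite mulnC exprM; exact: subFq_norm.
have := subset_leq_card sub_f; rewrite card_imset // card_ord (cardsD1 0 subFq) subFq0 /=.
by rewrite leq_subLR.
Qed.

Definition norm_form (z : K) : 'F_2 := toF2 (Tr (norm z)).

Lemma ofF2_norm_form z : ofF2 K (norm_form z) = Tr (norm z).
Proof. exact/trace_subFqK/subFq_norm. Qed.

Definition zeta : K := g ^+ (q - 1).

Lemma zeta_order : zeta ^+ (q + 1) = 1.
Proof.
by rewrite -exprM (_ : (q - 1) * (q + 1) = q * q - 1)%N ?(prim_expr_order prim_g) //;
  have := q_ge2; nia.
Qed.

Lemma zeta_neq0 : zeta != 0.
Proof. by rewrite expf_eq0 negb_and g_neq0 orbT. Qed.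

Lemma zeta_neq1 : zeta != 1.
Proof. by apply: gX_neq1; have := q_ge2; nia. Qed.

Lemma norm_zeta z : norm (zeta * z) = norm z.
Proof. by rewrite normM /norm zeta_order mul1r. Qed.

Lemma zetaX_gX n : zeta ^+ n * g ^+ n = (g ^+ n) ^+ q.
Proof.
rewrite -exprMn -exprSr subn1 prednK ?(ltnW q_ge2) //.
by rewrite -!exprM mulnC.
Qed.

Definition theta : K := g / (g + g ^+ q).

Lemma theta_frobenius : theta ^+ q = theta + 1.
Proof.
have w_neq0 : g + g ^+ q != 0 by rewrite addr_eq0 (oppr_pchar2 hK) eq_sym gexpq_neq.
rewrite exprMn exprVn exprD_pow2 // exprqK [g ^+ q + g]addrC; apply: (mulIf w_neq0).
by rewrite mulrDl !mulfVK // mul1r addrA (addrr_pchar2 hK) add0r.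
Qed.

(* N(theta) = theta^2 + theta, whose trace is theta^q + theta = 1 *)
Lemma trace_norm_theta : Tr (norm theta) = 1.
Proof.
rewrite normE theta_frobenius mulrDl mul1r -expr2 traceD // traceX2 // theta_frobenius.
by rewrite addrC !addrA (addrr_pchar2 hK) add0r addrAC (addrr_pchar2 hK) add0r.
Qed.

Lemma frobenius_zetaX_fixed n : exists y : K,
  [/\ y != 0, (zeta ^+ n * y) ^+ q = y & norm_form y = 1].
Proof.
have gn_neq0 : g ^+ n != 0 by rewrite expf_eq0 negb_and g_neq0 orbT.
have Ngn_neq0 : norm (g ^+ n) != 0 by rewrite /norm expf_eq0 negb_and gn_neq0 orbT.
have [s sFq s2] := subFq_sqrt (subFqM (subFq_norm theta) (subFqV (subFq_norm (g ^+ n)))).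
have Ny : norm (s * g ^+ n) = norm theta.
  by rewrite normM norm_subFq // s2 mulfVK.
have trNy : Tr (norm (s * g ^+ n)) = 1 by rewrite Ny trace_norm_theta.
exists (s * g ^+ n); split.
- apply/eqP => y0; move: trNy; rewrite y0 normE mulr0 trace0 // => /eqP.
  by rewrite eq_sym oner_eq0.
- by rewrite mulrCA zetaX_gX exprMn exprqK (subFqP _ sFq).
- by apply: (@ofF2_inj K); rewrite ofF2_norm_form trNy ofF2_1.
Qed.

Lemma trace_traceZ a y : a \in subFq -> Tr (Tr a * y) = Tr a * Tr y.
Proof. by move/trace_subFqK <-; rewrite trace_ofF2Z. Qed.

Definition trace_dual k (l l' : nat -> K) :=
  (forall i, (i < k)%N -> l i \in subFq /\ l' i \in subFq) /\
  (forall i j, (i < k)%N -> (j < k)%N -> Tr (l i * l' j) = (i == j)%:R).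

(* pigeonhole: w |-> (Tr (w l'_i))_(i<k) is additive and cannot be injective on subFq *)
Lemma exists_trace_orthogonal k (l' : nat -> K) : (k < m)%N ->
  (forall i, (i < k)%N -> l' i \in subFq) ->
  exists w, [/\ w \in subFq, w != 0 & forall i, (i < k)%N -> Tr (w * l' i) = 0].
Proof.
move=> lt_km l'Fq.
case: (pickP [pred w | [&& w \in subFq, w != 0 & [forall i : 'I_k, Tr (w * l' i) == 0]]]).
  move=> w /and3P[wFq w_neq0 /forallP wl']; exists w; split=> // i lt_ik.
  exact/eqP/(wl' (Ordinal lt_ik)).
move=> none; pose h w := [ffun i : 'I_k => toF2 (Tr (w * l' i))].
have h_inj : {in subFq &, injective h}.
  move=> w1 w2 w1Fq w2Fq /ffunP h12; apply/eqP; rewrite -subr_eq0 (oppr_pchar2 hK).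
  apply: contraFT (none (w1 + w2)) => w12; rewrite /= subFqD //= w12 /=.
  apply/forallP => i; have := h12 i; rewrite !ffunE => /(congr1 (ofF2 K)).
  rewrite !trace_subFqK ?subFqM ?l'Fq // => e12.
  by rewrite mulrDl traceD // e12 (addrr_pchar2 hK).
have := max_card (mem (h @: subFq)).
rewrite card_in_imset // card_subFq card_ffun !card_ord leq_exp2l //.
by rewrite leqNgt lt_km.
Qed.

(* Gram-Schmidt step: w is orthogonal to l'_0..l'_(k-1), and w' is corrected
   from any z with Tr (w z) = 1 so as to be orthogonal to l_0..l_(k-1) *)
Lemma trace_dual_ext k l l' : (k < m)%N -> trace_dual k l l' ->
  exists l1 l1', trace_dual k.+1 l1 l1'.
Proof.
move=> lt_km [lFq dual_ll'].
have [w [wFq w_neq0 wl']] := exists_trace_orthogonal lt_km (fun i lt_ik => (lFq i lt_ik).2).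
pose z := norm theta / w.
have zFq : z \in subFq by rewrite subFqM ?subFqV ?subFq_norm.
have wz : Tr (w * z) = 1 by rewrite /z mulrC mulfVK // trace_norm_theta.
have lzFq j : (j < k)%N -> l j * z \in subFq by move=> lt_jk; rewrite subFqM ?(lFq j lt_jk).1.
pose w' := z + \sum_(j < k) Tr (l j * z) * l' j.
have trace_w' a : a \in subFq ->
    Tr (a * w') = Tr (a * z) + \sum_(j < k) Tr (l j * z) * Tr (a * l' j).
  move=> aFq; rewrite mulrDr traceD // mulr_sumr trace_sum //; congr (_ + _).
  by apply: eq_bigr => j _; rewrite mulrCA trace_traceZ ?lzFq.
have l_w' i : (i < k)%N -> Tr (l i * w') = 0.
  move=> lt_ik; rewrite trace_w' ?(lFq i lt_ik).1 //.
  under eq_bigr => j _ do rewrite dual_ll' //.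
  by rewrite sum_delta_ord_nat (addrr_pchar2 hK).
have w_w' : Tr (w * w') = 1.
  by rewrite trace_w' // wz big1 ?addr0 // => j _; rewrite wl' // mulr0.
have w'Fq : w' \in subFq.
  rewrite subFqD // subFq_sum // => j.
  by rewrite subFqM ?subFq_trace ?lzFq ?(lFq j _).2.
exists (fun n => if n == k then w else l n), (fun n => if n == k then w' else l' n).
split=> [i | i j]; first rewrite ltnS leq_eqVlt => /predU1P[-> | lt_ik].
- by rewrite eqxx.
- by rewrite (ltn_eqF lt_ik); exact: lFq.
rewrite !ltnS leq_eqVlt => /predU1P[-> | lt_ik];
  rewrite leq_eqVlt => /predU1P[-> | lt_jk]; rewrite ?eqxx.
- by rewrite w_w'.
- by rewrite (ltn_eqF lt_jk) wl' // (gtn_eqF lt_jk).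
- by rewrite (ltn_eqF lt_ik) l_w' // (ltn_eqF lt_ik).
- by rewrite (ltn_eqF lt_ik) (ltn_eqF lt_jk) dual_ll'.
Qed.

Lemma exists_trace_dual : exists l l', trace_dual m l l'.
Proof.
suff: forall k, (k <= m)%N -> exists l l', trace_dual k l l' by apply.
elim=> [_ | k IHk lt_km]; first by exists (fun _ => 0), (fun _ => 0); split.
have [l [l' dual_ll']] := IHk (ltnW lt_km).
exact: trace_dual_ext dual_ll'.
Qed.

Lemma subFq_theta_eq0 u v : u \in subFq -> v \in subFq -> u + v * theta = 0 -> v = 0.
Proof.
move=> uFq vFq uv0; apply/eqP/negPn/negP => v_neq0.
have thetaFq : theta \in subFq.
  have -> : theta = u / v.
    apply: (mulIf v_neq0); rewrite mulfVK // mulrC; apply/eqP.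
    by rewrite -(oppr_pchar2 hK u) -subr_eq0 opprK addrC uv0.
  by rewrite subFqM ?subFqV.
move/subFqP: thetaFq; rewrite theta_frobenius => /(congr1 (fun t => t - theta)).
by rewrite addrAC subrr add0r => /eqP; rewrite oner_eq0.
Qed.

Lemma norm_polar u v u' v' :
  u \in subFq -> v \in subFq -> u' \in subFq -> v' \in subFq ->
  (u + v * theta) * (u' + v' * theta) ^+ q + (u + v * theta) ^+ q * (u' + v' * theta)
  = u * v' + v * u'.
Proof.
move=> /subFqP uq /subFqP vq /subFqP u'q /subFqP v'q.
rewrite !exprD_pow2 // [(v * _) ^+ _]exprMn [(v' * _) ^+ _]exprMn uq vq u'q v'q theta_frobenius.
have two0 : (2%:R : K) = 0 by exact: pcharf0 hK.
transitivity (u * v' + v * u' + 2%:R * (u * u' + u * v' * theta + v * u' * theta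
      + v * v' * theta * theta + v * v' * theta)); first by ring.
by rewrite two0 mul0r addr0.
Qed.

Definition comb (s : nat -> K) (c : 'I_m -> 'F_2) : K := \sum_i ofF2 K (c i) * s i.

Lemma combD s c c' : comb s (fun i => c i + c' i) = comb s c + comb s c'.
Proof. by rewrite /comb -big_split; apply: eq_bigr => i _; rewrite ofF2D // mulrDl. Qed.

Lemma eq_comb s c c' : c =1 c' -> comb s c = comb s c'.
Proof. by move=> cc'; apply: eq_bigr => i _; rewrite cc'. Qed.

Lemma comb_delta s j : comb s (fun i => (j == i)%:R) = s j.
Proof.
rewrite /comb -[RHS](sum_delta_mull (fun i : 'I_m => s i) j).
by apply: eq_bigr => i _; rewrite ofF2_nat.
Qed.

Lemma comb0 s : comb s (fun _ => 0) = 0.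
Proof. by rewrite /comb big1 // => i _; rewrite ofF2_0 mul0r. Qed.

Lemma subFq_comb s c : (forall i, (i < m)%N -> s i \in subFq) -> comb s c \in subFq.
Proof. by move=> sFq; apply: subFq_sum => i; rewrite subFqM ?subFq_ofF2 ?sFq. Qed.

Section TraceDualBasis.
Variables l l' : nat -> K.
Hypothesis dual_ll' : trace_dual m l l'.

Let lFq i : (i < m)%N -> l i \in subFq. Proof. by case/(dual_ll'.1 i). Qed.
Let l'Fq i : (i < m)%N -> l' i \in subFq. Proof. by case/(dual_ll'.1 i). Qed.

Lemma trace_comb_r c (j : 'I_m) : Tr (l j * comb l' c) = ofF2 K (c j).
Proof.
rewrite mulr_sumr trace_sum // -[RHS](sum_delta_mull (fun i => ofF2 K (c i)) j).
apply: eq_bigr => i _; rewrite mulrCA trace_ofF2Z // dual_ll'.2 //.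
by rewrite val_eqE mulrC.
Qed.

Lemma trace_comb_l c (j : 'I_m) : Tr (comb l c * l' j) = ofF2 K (c j).
Proof.
rewrite mulr_suml trace_sum // -[RHS](sum_delta_mull (fun i => ofF2 K (c i)) j).
apply: eq_bigr => i _; rewrite -mulrA trace_ofF2Z // dual_ll'.2 //.
by rewrite val_eqE eq_sym mulrC.
Qed.

Lemma trace_comb_lr c c' :
  Tr (comb l c * comb l' c') = \sum_i ofF2 K (c i) * ofF2 K (c' i).
Proof.
rewrite mulr_suml trace_sum //; apply: eq_bigr => i _.
by rewrite -mulrA trace_ofF2Z // trace_comb_r.
Qed.

(* a -> (Tr (a l'_i))_i maps subFq onto F_2^m (by trace_comb_l), hence bijectively *)
Lemma trace_coord_inj :
  {in subFq &, injective (fun a => [ffun i : 'I_m => toF2 (Tr (a * l' i))])}.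
Proof.
apply/imset_injP; set h := fun a => _.
have -> : h @: subFq = setT.
  apply/setP => f; rewrite inE; apply/imsetP; exists (comb l f); first exact: subFq_comb.
  by apply/ffunP => j; rewrite ffunE trace_comb_l ofF2K.
by rewrite cardsT card_ffun !card_ord card_subFq.
Qed.

Lemma subFq_span a : a \in subFq -> a = \sum_(i < m) Tr (a * l' i) * l i.
Proof.
move=> aFq; have al'Fq (i : 'I_m) : a * l' i \in subFq by rewrite subFqM ?l'Fq.
have -> : \sum_(i < m) Tr (a * l' i) * l i = comb l (fun i => toF2 (Tr (a * l' i))).
  by apply: eq_bigr => i _; rewrite trace_subFqK.
apply: trace_coord_inj => //; first exact: subFq_comb.
by apply/ffunP => j; rewrite !ffunE trace_comb_l ofF2K.
Qed.

Definition to_field (x : V m) : K :=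
  comb l (fun i => x 0 (lshift m i)) + comb l' (fun i => x 0 (rshift m i)) * theta.

Lemma to_fieldD : {morph to_field : x y / x + y}.
Proof.
move=> x y; rewrite /to_field.
under [comb l _]eq_bigr => i _ do rewrite mxE.
under [comb l' _]eq_bigr => i _ do rewrite mxE.
by rewrite -/(comb l _) -/(comb l' _) !combD mulrDl addrACA.
Qed.

Lemma to_field_e i : to_field (e_vec i) = l i.
Proof.
rewrite /to_field (eq_comb _ (e_vec_lshift i)) (eq_comb _ (e_vec_rshift i)).
by rewrite comb_delta comb0 mul0r addr0.
Qed.

Lemma to_field_f i : to_field (f_vec i) = l' i * theta.
Proof.
rewrite /to_field (eq_comb _ (f_vec_lshift i)) (eq_comb _ (f_vec_rshift i)).
by rewrite comb_delta comb0 add0r.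
Qed.

Lemma to_field_quadratic : is_quadratic_form (fun x => norm_form (to_field x)).
Proof.
apply: is_quadratic_formP => x y; apply: (@ofF2_inj K).
rewrite !ofF2D // !ofF2_norm_form to_fieldD normD {3 4}/to_field.
rewrite norm_polar ?subFq_comb // !traceD // [comb l' _ * _]mulrC.
rewrite !trace_comb_lr /std_form ofF2_sum //; congr (_ + _); rewrite -big_split.
by apply: eq_bigr => i _ /=; rewrite ofF2D // !ofF2M // [ofF2 K (y 0 _) * _]mulrC.
Qed.

(* with c^2 = N(theta): the i-th Arf term is Tr (l_i) Tr (c l'_i), which sums to Tr c = Tr (c^2) *)
Lemma arf_to_field : arf (fun x => norm_form (to_field x)) = 1.
Proof.
have [c cFq c2] := subFq_sqrt (subFq_norm theta).
have cl'Fq (i : 'I_m) : c * l' i \in subFq by rewrite subFqM ?l'Fq.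
apply: (@ofF2_inj K); rewrite ofF2_1 /arf ofF2_sum //.
transitivity (Tr (\sum_(i < m) Tr (c * l' i) * l i)).
  rewrite trace_sum //; apply: eq_bigr => i _.
  rewrite ofF2M // !ofF2_norm_form to_field_e to_field_f trace_traceZ //.
  rewrite normM [norm (l i)]norm_subFq ?lFq // [norm (l' i)]norm_subFq ?l'Fq //.
  by rewrite -c2 -exprMn [l' i * c]mulrC !trace_sqr_subFq ?lFq ?cl'Fq //; exact: mulrC.
by rewrite -subFq_span // -trace_sqr_subFq // c2 trace_norm_theta.
Qed.

Lemma to_field_eq0 x : to_field x = 0 -> x = 0.
Proof.
move=> x0; have r0 := subFq_theta_eq0 (subFq_comb _ lFq) (subFq_comb _ l'Fq) x0.
move: x0; rewrite /to_field r0 mul0r addr0 => l0.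
apply/rowP => k; rewrite mxE -(splitK k); case: (split k) => j /=; apply: (@ofF2_inj K).
  by rewrite -(trace_comb_l (fun i => x 0 (lshift m i))) l0 mul0r trace0.
by rewrite -(trace_comb_r (fun i => x 0 (rshift m i))) r0 mulr0 trace0.
Qed.

Lemma to_field_inj : injective to_field.
Proof.
move=> x y xy; have /to_field_eq0/eqP : to_field (x + y) = 0.
  by rewrite to_fieldD xy (addrr_pchar2 hK).
by rewrite addr_eq0 oppvF2 => /eqP.
Qed.

End TraceDualBasis.

Lemma exists_norm_form_isometry (Q : V m -> 'F_2) : is_quadratic_form Q -> arf Q = 1 ->
  exists Phi : V m -> K,
    [/\ bijective Phi, {morph Phi : x y / x + y} & forall x, norm_form (Phi x) = Q x].
Proof.
move=> hQ arfQ; have [l [l' dual_ll']] := exists_trace_dual.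
have [a [_ Rtv]] := arf_transvection hQ (to_field_quadratic dual_ll') (arf_to_field dual_ll') arfQ.
exists (fun x => to_field l l' (transvection a x)); split.
- apply: inj_card_bij => [x y /(to_field_inj dual_ll') | ].
    exact/(can_inj (transvectionK a)).
  by rewrite card_mx card_ord mul1n cardK.
- by move=> x y /=; rewrite transvectionD to_fieldD.
- by move=> x; rewrite Rtv transvectionK.
Qed.

Section NormFormModel.
Variables (Q : V m -> 'F_2) (Phi : V m -> K) (Psi : K -> V m).
Hypotheses (PhiK : cancel Phi Psi) (PsiK : cancel Psi Phi).
Hypotheses (PhiD : {morph Phi : x y / x + y}) (PhiQ : forall x, norm_form (Phi x) = Q x).

Let Phi0 : Phi 0 = 0.
Proof. by apply: (addrI (Phi 0)); rewrite -PhiD !addr0. Qed.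

Let PsiD : {morph Psi : u v / u + v}.
Proof. by move=> u v; apply: (can_inj PhiK); rewrite PhiD !PsiK. Qed.

Lemma transport_inj (f : K -> K) : injective f -> injective (fun x => Psi (f (Phi x))).
Proof. by move=> f_inj x y /(can_inj PsiK)/f_inj/(can_inj PhiK). Qed.

Definition transport_perm f (f_inj : injective f) : {perm V m} := perm (transport_inj f_inj).

Lemma transport_permE f (f_inj : injective f) x : transport_perm f_inj x = Psi (f (Phi x)).
Proof. exact: permE. Qed.

Lemma transport_perm_OQ f (f_inj : injective f) : {morph f : u v / u + v} ->
  (forall z, norm_form (f z) = norm_form z) -> in_OQ Q (transport_perm f_inj).
Proof.
move=> fD fN; split=> [|x]; last by rewrite transport_permE -PhiQ PsiK fN.
by apply: additive_F2linear => x y; rewrite !transport_permE PhiD fD PsiD.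
Qed.

Definition zeta_perm : {perm V m} := transport_perm (mulfI zeta_neq0).
Definition frobenius_perm : {perm V m} := transport_perm (can_inj exprqK).

Lemma zeta_perm_OQ : in_OQ Q zeta_perm.
Proof. by apply: transport_perm_OQ => [u v | z]; rewrite ?mulrDr // /norm_form norm_zeta. Qed.

Lemma frobenius_perm_OQ : in_OQ Q frobenius_perm.
Proof.
by apply: transport_perm_OQ => [u v | z]; rewrite ?exprD_pow2 // /norm_form norm_frobenius.
Qed.

Lemma zeta_permX n x : (zeta_perm ^+ n)%g x = Psi (zeta ^+ n * Phi x).
Proof.
elim: n x => [|n IHn] x; first by rewrite expg0 perm1 expr0 mul1r PhiK.
by rewrite expgSr permM IHn transport_permE PsiK exprSr mulrA [zeta ^+ n * _]mulrC.
Qed.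

Lemma zeta_perm_neq1 : zeta_perm != 1%g.
Proof.
apply: contra zeta_neq1 => /eqP/permP/(_ (Psi 1)); rewrite perm1 transport_permE PsiK.
by rewrite mulr1 => /(can_inj PsiK) ->.
Qed.

Lemma frobenius_perm_invol : (frobenius_perm ^+ 2)%g = 1%g.
Proof. by apply/permP => x; rewrite expgS expg1 permM !transport_permE PsiK exprqK PhiK perm1. Qed.

(* (z^q)^q = z and zeta^q = zeta^-1 *)
Lemma frobenius_zeta_perm :
  (frobenius_perm * zeta_perm * frobenius_perm)%g = (zeta_perm^-1)%g.
Proof.
apply/eqP; rewrite eq_sym eq_invg_mul; apply/eqP/permP => x.
rewrite perm1 !permM !transport_permE !PsiK exprMn exprqK mulrA -exprSr.
by rewrite -[q.+1]addn1 zeta_order mul1r PhiK.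
Qed.

Lemma zeta_permX_fixed n x :
  (zeta_perm ^+ n)%g != 1%g -> (zeta_perm ^+ n)%g x = x -> x = 0.
Proof.
move=> zn_neq1 /(congr1 Phi); rewrite zeta_permX PsiK => zx.
apply: (can_inj PhiK); rewrite Phi0; apply/eqP; apply: contraNT zn_neq1 => x_neq0.
have zn1 : zeta ^+ n = 1 by apply: (mulIf x_neq0); rewrite mul1r.
by apply/eqP/permP => y; rewrite zeta_permX perm1 zn1 mul1r PhiK.
Qed.

Lemma frobenius_zeta_permX_fixed n : exists x : V m,
  [/\ x != 0, frobenius_perm ((zeta_perm ^+ n)%g x) = x & Q x = 1].
Proof.
have [y [y_neq0 yfix Ny]] := frobenius_zetaX_fixed n.
exists (Psi y); split.
- by apply: contra_neq y_neq0 => y0; rewrite -(PsiK y) y0 Phi0.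
- by rewrite zeta_permX PsiK transport_permE PsiK yfix.
- by rewrite -PhiQ PsiK.
Qed.

End NormFormModel.
End FiniteField.

Theorem mainTheorem10 (m : nat) (hm : (1 <= m)%N) (Q : V m -> 'F_2)
  (hQ : is_quadratic_form Q) (harf : arf Q = 1) :
  exists sigma tau : {perm V m},
    [/\ (in_OQ Q sigma /\ in_OQ Q tau),
        sigma != (1%g),
        ((tau ^+ 2)%g = (1%g) /\
        (tau * sigma * tau)%g = (sigma^-1)%g),
        (forall i : int, gpowz sigma i != (1%g) ->
           forall x : V m, gpowz sigma i x = x -> x = 0)
      & (forall i : int, exists x : V m,
           [/\ x != 0, tau (gpowz sigma i x) = x & Q x = 1])].
Proof.
have [K hK cardK] := @pPrimePowerField 2 (m + m) isT (ltn_addl m hm).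
have [g prim_g] := exists_prim_root hm hK cardK.
have [Phi [[Psi PhiK PsiK] PhiD PhiQ]] := exists_norm_form_isometry hm hK cardK prim_g hQ harf.
pose sigma := zeta_perm hm hK cardK prim_g PhiK PsiK.
exists sigma, (frobenius_perm cardK PhiK PsiK).
split; [split | | split | move=> i | move=> i].
- exact: zeta_perm_OQ.
- exact: frobenius_perm_OQ.
- exact: zeta_perm_neq1.
- exact: frobenius_perm_invol.
- exact: frobenius_zeta_perm.
- have [n ->] := gpowz_expg sigma i; move=> sn_neq1 x; exact: zeta_permX_fixed.
- by have [n ->] := gpowz_expg sigma i; exact: frobenius_zeta_permX_fixed.
Qed.
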